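(* Let $\Gamma$ be a group and let $\mathbb{K}$ be a field. Then the set of normal subgroups $N \subset \Gamma$ such that the quotient group $\Gamma/N$ is L$_{\mathbb{K}}$-surjunctive is closed (and hence compact) in $\mathcal{N}(\Gamma)$.
   Context: $\mathcal{N}(\Gamma)$ denotes the set of normal subgroups of $\Gamma$, viewed as a subset of $\mathcal{P}(\Gamma) = \{0,1\}^\Gamma$ with the prodiscrete (product of discrete) topology; it is compact. For a group $G$ and a vector space $V$ over $\mathbb{K}$, $V^G$ carries the prodiscrete uniform structure and the $G$-shift $(gx)(h) = x(g^{-1}h)$. A linear cellular automaton $\tau \colon V^G \to V^G$ is a $\mathbb{K}$-linear map for which there exist a finite set $S \subset G$ and a (linear) map $\mu \colon V^S \to V$ with $\tau(x)(g) = \mu((g^{-1}x)\vert_S)$ for all $x \in V^G$, $g \in G$. A map is surjunctive if it is surjective or not injective. A group $G$ is L$_{\mathbb{K}}$-surjunctive if for every finite-dimensional vector space $V$ over $\mathbb{K}$, every linear cellular automaton $\tau \colon V^G \to V^G$ is surjunctive. *)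

From HB Require Import structures.
From mathcomp Require Import all_boot all_order ssralg vector.
From mathcomp Require Import boolp classical_sets topology function_spaces.

Set Implicit Arguments.
Unset Strict Implicit.
Unset Printing Implicit Defensive.

Section Quotient.
Variable G : groupType.
Local Open Scope group_scope.

(* N : G -> bool is a subset of G, i.e. an element of P(G) = {0,1}^G. *)
Definition is_normal_subgroup (N : G -> bool) : Prop :=
  [/\ N 1,
      (forall x y, N x -> N y -> N (x * y^-1)) &
      (forall g x, N x -> N (g^-1 * x * g))].

Definition lcoset (N : G -> bool) (g : G) : G -> bool := fun h => N (g^-1 * h).

Variables (N : G -> bool) (hN : is_normal_subgroup N).

Definition quot_carrier : Type := {A : G -> bool | exists g, A = lcoset N g}.

HB.instance Definition _ := gen_eqMixin quot_carrier.
HB.instance Definition _ := gen_choiceMixin quot_carrier.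

Definition qmk (g : G) : quot_carrier := exist _ (lcoset N g) (ex_intro _ g erefl).
Definition qrepr (A : quot_carrier) : G := sval (cid (svalP A)).

Lemma qreprE A : A = qmk (qrepr A).
Proof.
case: A => A hA; rewrite /qrepr /qmk /=; case: (cid _) => g hg /=.
exact: eq_exist.
Qed.

Lemma N_inv x : N x -> N x^-1.
Proof. by case: hN => h1 hd _ /(hd 1) -/(_ h1); rewrite mul1g. Qed.

Lemma N_mul x y : N x -> N y -> N (x * y).
Proof.
case: hN => _ hd _ Nx /N_inv Ny; by have := hd _ _ Nx Ny; rewrite invgK.
Qed.

Lemma N_conj g x : N x -> N (g^-1 * x * g).
Proof. by case: hN => _ _; apply. Qed.

Lemma qmk_eq a b : N (a^-1 * b) -> qmk a = qmk b.
Proof.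
move=> Nab; apply: eq_exist; apply: funext => h; rewrite /lcoset.
apply/idP/idP => H.
  have := N_mul (N_inv Nab) H; by rewrite invgM invgK mulgA mulgK.
have := N_mul Nab H; by rewrite mulgA mulgK.
Qed.

Lemma qmk_eqP a b : qmk a = qmk b -> N (a^-1 * b).
Proof.
move=> /(congr1 sval) /= /(congr1 (fun f => f b)); rewrite /lcoset mulVg => ->.
by case: hN.
Qed.

Definition qmul (A B : quot_carrier) := qmk (qrepr A * qrepr B).
Definition qone := qmk 1.
Definition qinv (A : quot_carrier) := qmk (qrepr A)^-1.

Lemma qmulE a b : qmul (qmk a) (qmk b) = qmk (a * b).
Proof.
rewrite /qmul; apply: qmk_eq.
have ha := qmk_eqP (esym (qreprE (qmk a))).
have hb := qmk_eqP (esym (qreprE (qmk b))).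
move: ha hb; set a' := qrepr (qmk a); set b' := qrepr (qmk b) => ha hb.
have -> : (a' * b')^-1 * (a * b) = (b'^-1 * (a'^-1 * a) * b') * (b'^-1 * b).
  by rewrite invgM -!mulgA mulVKg.
by apply: N_mul => //; exact: N_conj.
Qed.

Lemma qinvE a : qinv (qmk a) = qmk a^-1.
Proof.
rewrite /qinv; apply: qmk_eq.
have ha := qmk_eqP (esym (qreprE (qmk a))).
move: ha; set a' := qrepr (qmk a) => ha.
rewrite invgK.
have := N_conj a^-1 (N_inv ha); by rewrite invgM !invgK mulVKg.
Qed.

Lemma qind (P : quot_carrier -> Prop) : (forall a, P (qmk a)) -> forall A, P A.
Proof. by move=> H A; rewrite (qreprE A). Qed.

Lemma qmulA : associative qmul.
Proof.
by elim/qind => a; elim/qind => b; elim/qind => c; rewrite !qmulE mulgA.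
Qed.
Lemma qmul1 : left_id qone qmul.
Proof. by elim/qind => a; rewrite /qone qmulE mul1g. Qed.
Lemma qmulr1 : right_id qone qmul.
Proof. by elim/qind => a; rewrite /qone qmulE mulg1. Qed.
Lemma qmulV : left_inverse qone qinv qmul.
Proof. by elim/qind => a; rewrite qinvE qmulE mulVg. Qed.
Lemma qmulrV : right_inverse qone qinv qmul.
Proof. by elim/qind => a; rewrite qinvE qmulE mulgV. Qed.

End Quotient.

Definition quotient_by (G : groupType) (N : G -> bool)
  (hN : is_normal_subgroup N) : Type := quot_carrier N.

HB.instance Definition _ (G : groupType) (N : G -> bool)
  (hN : is_normal_subgroup N) := gen_eqMixin (quotient_by hN).
HB.instance Definition _ (G : groupType) (N : G -> bool)
  (hN : is_normal_subgroup N) := gen_choiceMixin (quotient_by hN).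
HB.instance Definition _ (G : groupType) (N : G -> bool)
  (hN : is_normal_subgroup N) :=
  isGroup.Build (quotient_by hN) (qmulA hN) (qmul1 hN) (qmulr1 hN)
    (qmulV hN) (qmulrV hN).

Section CA.
Variables (K : fieldType) (G : groupType) (V : vectType K).
Local Open Scope ring_scope.

Definition is_K_linear (tau : (G -> V) -> (G -> V)) : Prop :=
  forall (a : K) (x y : G -> V),
    tau (fun h => a *: x h + y h) = (fun h => a *: tau x h + tau y h).

(* tau is a linear cellular automaton: tau is K-linear and there are a finite
   memory set S (listed by the sequence S) and a linear local rule
   mu : V^S -> V with tau(x)(g) = mu ((g^-1 x)|_S), where (g^-1 x)(s) = x(g s). *)
Definition is_linear_CA (tau : (G -> V) -> (G -> V)) : Prop :=
  is_K_linear tau /\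
  exists (S : seq G) (mu : {linear {ffun 'I_(size S) -> V} -> V}),
    forall (x : G -> V) (g : G),
      tau x g = mu [ffun i => x (g * tnth (in_tuple S) i)%g].
End CA.

Definition surjunctive (A B : Type) (f : A -> B) : Prop :=
  (forall y, exists x, f x = y) \/ ~ injective f.

Definition LK_surjunctive (K : fieldType) (G : groupType) : Prop :=
  forall (V : vectType K) (tau : (G -> V) -> (G -> V)),
    is_linear_CA tau -> surjunctive tau.

From HB Require Import structures.
From mathcomp Require Import all_boot all_order ssralg vector.
From mathcomp Require Import boolp classical_sets topology function_spaces.
From mathcomp Require Import cardinality.

(* If Gamma/N is not L_K-surjunctive, it carries an injective, non-surjective
   linear cellular automaton tau over some finite-dimensional V. Such a tau has a
   cellular automaton sigma with sigma o tau = id: the value x(1) is determined by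
   tau(x) on a finite window, by a compactness argument combining Zorn's lemma
   with the descending chain condition on subspaces of V. After lifting the
   memory sets of tau and sigma to Gamma, the identity sigma o tau = id and the
   failure of tau o sigma = id only depend on which of finitely many elements of
   Gamma lie in N, so they persist, with the same local rules, for every normal
   subgroup agreeing with N on a finite set. Hence non-surjunctivity is an open
   condition on N(Gamma), which is closed in the compact space {0,1}^Gamma. *)

Set Implicit Arguments.
Unset Strict Implicit.
Unset Printing Implicit Defensive.

Import GRing.Theory.
Local Open Scope classical_set_scope.
Local Open Scope ring_scope.

Section FiniteDimensional.
Variables (K : fieldType) (V : vectType K).

Definition linear_set (P : set V) :=
  P 0 /\ forall a x y, P x -> P y -> P (a *: x + y).

Definition affine_set (A : set V) :=
  forall a x y z, A x -> A y -> A z -> A (a *: (x - y) + z).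

Lemma linear_set_vspace (P : set V) :
  linear_set P -> exists U : {vspace V}, forall v, v \in U <-> P v.
Proof.
move=> [P0 PZ].
pose inP m := `[< exists U : {vspace V}, (forall v, v \in U -> P v) /\ \dim U = m >].
have inP0 : exists m, inP m.
  exists 0%N; apply/asboolP; exists 0%VS; split; last exact: dimv0.
  by move=> v; rewrite memv0 => /eqP ->.
have inP_bounded m : inP m -> (m <= \dim (fullv : {vspace V}))%N.
  by move=> /asboolP [U [_ <-]]; exact/dimvS/subvf.
have [_ /asboolP [U [UP <-]] Umax] := ex_maxnP inP0 inP_bounded.
exists U => v; split=> [/UP //|Pv].
have UvP w : w \in (U + <[v]>)%VS -> P w.
  by move=> /memv_addP [u /UP Pu [_ /vlineP [k ->] ->]]; rewrite addrC; exact: PZ.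
have le_dim : (\dim (U + <[v]>) <= \dim U)%N.
  by apply/Umax/asboolP; exists (U + <[v]>)%VS.
have /eqP <- : (U + <[v]> == U)%VS by rewrite eq_sym eqEdim addvSl le_dim.
by rewrite -{1}[v]add0r; apply: memv_add; [exact: mem0v | exact: memv_line].
Qed.

Section Directed.
Variables (I : Type) (i1 : I).

Lemma directed_linear_set_min (P : I -> set V) :
  (forall i, linear_set (P i)) -> (forall i j, exists k, P k `<=` P i `&` P j) ->
  exists i0, forall j, P i0 `<=` P j.
Proof.
move=> Plin Pdir.
have [U UP] := choice (fun i => linear_set_vspace (Plin i)).
pose dimU m := `[< exists i, \dim (U i) = m >].
have dimU1 : exists m, dimU m by exists (\dim (U i1)); apply/asboolP; exists i1.
have [_ /asboolP [i0 <-] Umin] := ex_minnP dimU1.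
exists i0 => j; have [k Pk] := Pdir i0 j.
have sUk : (U k <= U i0)%VS by apply/subvP => v /UP /Pk [/UP].
have /eqP eqUk : U k == U i0.
  by rewrite eqEdim sUk; apply/Umin/asboolP; exists k.
by move=> v /UP; rewrite -eqUk => /UP /Pk [].
Qed.

Lemma directed_affine_set_meet (A : I -> set V) :
  (forall i, affine_set (A i)) -> (forall i, A i !=set0) ->
  (forall i j, exists k, A k `<=` A i `&` A j) ->
  exists v, forall i, A i v.
Proof.
move=> Aaff Ane Adir.
pose D i := [set x - y | x in A i & y in A i].
have Dlin i : linear_set (D i).
  split; first by have [a Aa] := Ane i; exists a => //; exists a => //; rewrite subrr.
  move=> a _ _ [x Ax [y Ay <-]] [x' Ax' [y' Ay' <-]].
  by exists (a *: (x - y) + x'); [exact: Aaff | exists y' => //; rewrite addrA].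
have Ddir i j : exists k, D k `<=` D i `&` D j.
  have [k Ak] := Adir i j; exists k => _ [x /Ak [Aix Ajx] [y /Ak [Aiy Ajy] <-]].
  by split; [exists x => //; exists y | exists x => //; exists y].
have [i0 Di0] := directed_linear_set_min Dlin Ddir.
have [b Ab] := Ane i0.
exists b => j; have [k Ak] := Adir i0 j; have [c Ac] := Ane k.
have [x Akx [y Aky xy]] : D k (b - c).
  by apply: Di0; exists b => //; exists c => //; exact: (Ak _ Ac).1.
have -> : b = 1 *: (x - y) + c by rewrite scale1r xy subrK.
by apply: (Ak _ _).2; apply: Aaff.
Qed.

End Directed.

End FiniteDimensional.

Lemma total_bigcup_seq (T : eqType) (F : set (set T)) (E : seq T) :
  total_on F subset ->
  exists2 X, X = set0 \/ F X & forall e, e \in E -> (\bigcup_(Y in F) Y) e -> X e.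
Proof.
move=> Ftot; elim: E => [|e E [X FX EX]]; first by exists set0 => //; left.
have [[Y FY Ye]|nFe] := pselect ((\bigcup_(Y in F) Y) e); last first.
  by exists X => // e'; rewrite inE => /orP [/eqP -> /nFe|/EX].
have [XY|YX] : X `<=` Y \/ Y `<=` X.
  by case: FX => [->|FX']; [left; exact: sub0set | exact: Ftot].
  by exists Y; [right | move=> e'; rewrite inE => /orP [/eqP -> //|/EX /[apply] /XY]].
by exists X => // e'; rewrite inE => /orP [/eqP -> _|/EX //]; exact: YX.
Qed.

Section LinearCA.
Variables (K : fieldType) (G : groupType) (V : vectType K).
Variables (n : nat) (s : 'I_n -> G) (mu : {linear {ffun 'I_n -> V} -> V}).

Definition lca (x : G -> V) (g : G) : V := mu [ffun i => x (g * s i)%g].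

Lemma lcaZD a x y g : lca (fun h => a *: x h + y h) g = a *: lca x g + lca y g.
Proof. by rewrite /lca -linearP; congr (mu _); apply/ffunP => i; rewrite !ffunE. Qed.

Lemma lca_affine a x y z g :
  lca (fun h => a *: (x h - y h) + z h) g = a *: (lca x g - lca y g) + lca z g.
Proof.
rewrite /lca -linearB -linearP; congr (mu _); apply/ffunP => i.
by rewrite !ffunE.
Qed.

Lemma lcaB x y g : lca (fun h => x h - y h) g = lca x g - lca y g.
Proof. by rewrite /lca -linearB; congr (mu _); apply/ffunP => i; rewrite !ffunE. Qed.

Lemma lca0 g : lca (fun=> 0) g = 0.
Proof.
by rewrite /lca (_ : [ffun _ => _] = 0) ?linear0 //; apply/ffunP => i; rewrite !ffunE.
Qed.

Lemma lca_local x y g :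
  (forall i, x (g * s i)%g = y (g * s i)%g) -> lca x g = lca y g.
Proof. by move=> xy; rewrite /lca; congr (mu _); apply/ffunP => i; rewrite !ffunE. Qed.

Lemma lca_translate x g h : lca (fun k => x (g * k)%g) h = lca x (g * h)%g.
Proof. by rewrite /lca; congr (mu _); apply/ffunP => i; rewrite !ffunE mulgA. Qed.

Definition kernel_on (F : seq G) (x : G -> V) := forall f, f \in F -> lca x f = 0.

(* A partial configuration is a set of prescribed values (g, w); it need not be
   functional, as consistency forces that, so chains are joined by plain unions. *)
Definition consistent (S : set (G * V)) := forall (F : seq G) (E : seq (G * V)),
  exists x, kernel_on F x /\ forall e, e \in E -> S e -> x e.1 = e.2.

Lemma consistent_functional S g w w' :
  consistent S -> S (g, w) -> S (g, w') -> w = w'.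
Proof.
move=> /(_ [::] [:: (g, w); (g, w')]) [x [_ xS]] Sw Sw'.
have /= <- := xS (g, w) (mem_head _ _) Sw.
by rewrite (xS (g, w')) // !inE eqxx orbT.
Qed.

Lemma consistent_extend S g :
  consistent S -> exists w, consistent (S `|` [set (g, w)]).
Proof.
move=> Scons.
pose A (i : seq G * seq (G * V)) := [set x g | x in
  [set x | kernel_on i.1 x /\ forall e, e \in i.2 -> S e -> x e.1 = e.2]].
have Aaff i : affine_set (A i).
  move=> a _ _ _ [x [x0 xS] <-] [y [y0 yS] <-] [z [z0 zS] <-].
  exists (fun h => a *: (x h - y h) + z h) => //; split.
    by move=> f fi; rewrite lca_affine x0 // y0 // z0 // subrr scaler0 addr0.
  by move=> e ei Se; rewrite xS // yS // zS // subrr scaler0 add0r.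
have Ane i : A i !=set0 by have [x xi] := Scons i.1 i.2; exists (x g), x.
have Adir i j : exists k, A k `<=` A i `&` A j.
  exists (i.1 ++ j.1, i.2 ++ j.2) => _ [x [x0 xS] <-].
  by split; exists x => //; split=> [f fi|e ei];
    (apply: x0 || apply: xS); rewrite mem_cat ?fi ?ei ?orbT.
have [w Aw] := directed_affine_set_meet ([::], [::]) Aaff Ane Adir.
exists w => F E; have [x [x0 xS] xg] := Aw (F, E).
by exists x; split=> // e ei [/(xS e ei) //|->].
Qed.

Lemma consistent_bigcup (S0 : set (G * V)) (C : set (set (G * V))) :
  consistent S0 -> (forall X, C X -> consistent (S0 `|` X)) ->
  total_on C subset -> consistent (S0 `|` \bigcup_(X in C) X).
Proof.
move=> S0cons Ccons Ctot F E.
have [X CX EX] := total_bigcup_seq E Ctot.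
have XSX : consistent (S0 `|` X) by case: CX => [->|/Ccons //]; rewrite setU0.
have [x [x0 xS]] := XSX F E.
by exists x; split=> // e ei [S0e|/(EX e ei) Xe]; apply: xS => //; [left | right].
Qed.

Lemma consistent_total_extension S0 : consistent S0 ->
  exists2 M, S0 `<=` M & consistent M /\ forall g, exists w, M (g, w).
Proof.
move=> S0cons.
have [A [Acons Amax]] := @Zorn_bigcup _ [set X | consistent (S0 `|` X)]
  (fun C CP => consistent_bigcup S0cons CP).
exists (S0 `|` A); first exact: subsetUl.
split=> // g; have [w Mw] := consistent_extend g Acons.
exists w; apply: contrapT => nMw; apply: (Amax (A `|` [set (g, w)])).
  split; first exact: subsetUl.
  by move=> /(_ (g, w) (or_intror erefl)) Aw; apply: nMw; right.
by rewrite /= setUA.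
Qed.

Lemma consistent_kernel M : consistent M -> (forall g, exists w, M (g, w)) ->
  exists2 x, forall g, M (g, x g) & forall g, lca x g = 0.
Proof.
move=> Mcons /choice [x Mx]; exists x => // g.
have [y [y0 yM]] := Mcons [:: g] [seq (g * s i, x (g * s i))%g | i <- enum 'I_n].
rewrite (@lca_local x y) ?y0 ?mem_head // => i.
symmetry; apply: (yM (_, _)); last exact: Mx.
by apply: map_f; rewrite mem_enum.
Qed.

Hypothesis lca_inj : injective lca.

Lemma injective_lca_window : exists F, forall x, kernel_on F x -> x 1%g = 0.
Proof.
pose P F := [set x 1%g | x in kernel_on F].
have Plin F : linear_set (P F).
  split; first by exists (fun=> 0) => // f _; exact: lca0.
  move=> a _ _ [x x0 <-] [y y0 <-]; exists (fun h => a *: x h + y h) => //.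
  by move=> f fF; rewrite lcaZD x0 // y0 // scaler0 addr0.
have Pdir F F' : exists F'', P F'' `<=` P F `&` P F'.
  by exists (F ++ F') => _ [x x0 <-]; split; exists x => // f fF;
    apply: x0; rewrite mem_cat fF ?orbT.
have [F0 F0min] := directed_linear_set_min [::] Plin Pdir.
exists F0 => x x0.
have S0cons : consistent [set (1%g, x 1%g)].
  move=> F E; have [y y0 yx] := F0min F _ (ex_intro2 _ _ x x0 erefl).
  by exists y; split=> // e _ ->.
have [M S0M [Mcons Mtot]] := consistent_total_extension S0cons.
have [z Mz z0] := consistent_kernel Mcons Mtot.
have -> : x 1%g = z 1%g by apply: consistent_functional Mcons (S0M _ erefl) (Mz _).
suff -> : z = fun=> 0 by [].
by apply: lca_inj; apply: funext => g; rewrite z0 lca0.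
Qed.

Lemma lca_left_inverse : exists m (t : 'I_m -> G) (nu : {ffun 'I_m -> V} -> V),
  forall x g, nu [ffun j => lca x (g * t j)%g] = x g.
Proof.
have [F F0] := injective_lca_window.
pose t j := tnth (in_tuple F) j.
pose read x := [ffun j => lca x (t j)].
pose nu w := if pselect (exists x, read x = w) is left h then (projT1 (cid h)) 1%g
             else 0.
have nu_read x : nu (read x) = x 1%g.
  rewrite /nu; case: pselect => [h|[]]; last by exists x.
  case: (cid h) => x' /= x'x; apply/eqP; rewrite -subr_eq0; apply/eqP.
  apply: (F0 (fun h => x' h - x h)) => f /(tnthP (in_tuple F)) [j ->].
  by rewrite lcaB; have /ffunP/(_ j) := x'x; rewrite !ffunE => ->; exact: subrr.
exists (size F), t, nu => x g.
have := nu_read (fun h => x (g * h)%g); rewrite mulg1 => <-.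
by congr nu; apply/ffunP => j; rewrite !ffunE lca_translate.
Qed.

End LinearCA.

Section FfunCast.
Variables (K : fieldType) (V : lmodType K) (m n : nat) (e : m = n).

Definition ffun_cast (w : {ffun 'I_m -> V}) : {ffun 'I_n -> V} :=
  [ffun i => w (cast_ord (esym e) i)].

Lemma ffun_cast_linear : linear ffun_cast.
Proof. by move=> a x y; apply/ffunP => i; rewrite !ffunE. Qed.

HB.instance Definition _ := GRing.isLinear.Build K {ffun 'I_m -> V} {ffun 'I_n -> V}
  _ ffun_cast ffun_cast_linear.

End FfunCast.

Section LinearCAcharacterisation.
Variables (K : fieldType) (G : groupType).

Lemma lca_linear_CA (V : vectType K) n (s : 'I_n -> G)
    (mu : {linear {ffun 'I_n -> V} -> V}) :
  is_linear_CA (lca s mu).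
Proof.
split=> [a x y|]; first by apply: funext => g; exact: lcaZD.
pose S := [seq s i | i <- enum 'I_n].
have sizeS : size S = n by rewrite size_map size_enum_ord.
exists S, (mu \o ffun_cast sizeS)%FUN => x g /=.
rewrite /lca; congr (mu _); apply/ffunP => i; rewrite !ffunE.
by rewrite (tnth_nth (s i)) /= (nth_map i) ?size_enum_ord // nth_ord_enum.
Qed.

Lemma linear_CA_lca (V : vectType K) (tau : (G -> V) -> G -> V) :
  is_linear_CA tau -> exists n (s : 'I_n -> G) (mu : {linear {ffun 'I_n -> V} -> V}),
    tau = lca s mu.
Proof.
move=> [_ [S [mu taumu]]]; exists (size S), (tnth (in_tuple S)), mu.
by apply: funext => x; apply: funext => g; rewrite taumu.
Qed.

Lemma not_LK_surjunctiveP : ~ LK_surjunctive K G <->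
  exists (V : vectType K) n (s : 'I_n -> G) (mu : {linear {ffun 'I_n -> V} -> V}),
    injective (lca s mu) /\ ~ (forall y, exists x, lca s mu x = y).
Proof.
split=> [nLK|[V [n [s [mu [inj nsurj]]]]] LK]; last first.
  by case: (LK V _ (lca_linear_CA s mu)).
apply: contrapT => nex; apply: nLK => V tau /linear_CA_lca [n [s [mu ->]]].
have [inj|] := pselect (injective (lca s mu)); last by right.
by left; apply: contrapT => nsurj; apply: nex; exists V, n, s, mu.
Qed.

End LinearCAcharacterisation.

Lemma left_inverse_not_surjective (A B : Type) (f : A -> B) (g : B -> A) :
  cancel f g -> (exists y, f (g y) <> y) ->
  injective f /\ ~ (forall y, exists x, f x = y).
Proof.
move=> fK [y fgy]; split; first exact: can_inj fK.
by move=> /(_ y) [x fx]; apply: fgy; rewrite -fx fK.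
Qed.

Section QuotientTransfer.
Variables (Gam : groupType) (K : fieldType) (V : vectType K).

Definition respects (N : Gam -> bool) (E : seq Gam) (z : Gam -> V) :=
  forall a b, a \in E -> b \in E -> N (a^-1 * b)%g -> z a = z b.

Lemma respects_agree (N N' : Gam -> bool) (E E' : seq Gam) z : {subset E <= E'} ->
  {in [seq (a^-1 * b)%g | a <- E', b <- E'], N' =1 N} ->
  respects N E z <-> respects N' E z.
Proof.
move=> EE' N'N; have agree a b : a \in E -> b \in E -> N' (a^-1 * b)%g = N (a^-1 * b)%g.
  by move=> aE bE; apply/N'N/allpairs_f; exact: EE'.
by split=> zN a b aE bE; [rewrite agree //|rewrite -agree //]; exact: zN.
Qed.

Section FixedQuotient.
Variables (N : Gam -> bool) (hN : is_normal_subgroup N).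
Local Notation Q := (quotient_by hN).
Local Notation "[ a ]" := (qmk N a : Q).

Lemma qmkM a b : ([a] * [b])%g = [a * b]%g.
Proof. exact: qmulE. Qed.

Lemma respects_factor E z : respects N E z ->
  exists x : Q -> V, forall a, a \in E -> x [a] = z a.
Proof.
move=> zN; exists (fun A => if pselect (exists2 a, a \in E & [a] = A) is left h
                       then z (projT1 (cid2 h)) else 0).
move=> a aE; case: pselect => [h|[]]; last by exists a.
by case: (cid2 h) => a' a'E /= /(qmk_eqP hN) Na'a; apply: zN.
Qed.

Lemma respects_translate E (x : Q -> V) g : respects N E (fun h => x [g * h]%g).
Proof.
move=> a b _ _ Nab; congr x; apply: (qmk_eq hN).
by rewrite invgM -mulgA mulKg.
Qed.

Lemma fixed_quotient_local (T : (Q -> V) -> Q -> V) (Phi : (Gam -> V) -> V) E :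
  1%g \in E -> (forall z z', {in E, z =1 z'} -> Phi z = Phi z') ->
  (forall x g, T x [g] = Phi (fun h => x [g * h]%g)) ->
  (forall x, T x = x) <-> (forall z, respects N E z -> Phi z = z 1%g).
Proof.
move=> E1 Phi_local TPhi; split=> [Tid z zN|Phi1 x].
  have [x xz] := respects_factor zN.
  rewrite -xz // -(Tid x) TPhi; apply: Phi_local => h hE.
  by rewrite mul1g xz.
apply: funext => A; rewrite (qreprE A) TPhi Phi1 ?mulg1 //.
exact: respects_translate.
Qed.

End FixedQuotient.

Section LiftedRules.
Variables (n m : nat) (st : 'I_n -> Gam) (ft : 'I_m -> Gam).
Variables (mu : {linear {ffun 'I_n -> V} -> V}) (nu : {ffun 'I_m -> V} -> V).
Variables (N : Gam -> bool) (hN : is_normal_subgroup N).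
Local Notation Q := (quotient_by hN).
Local Notation "[ a ]" := (qmk N a : Q).

Definition tauQ : (Q -> V) -> Q -> V := lca (fun i => [st i]) mu.

Definition sigQ (y : Q -> V) (A : Q) : V := nu [ffun j => y (A * [ft j])%g].

Definition Phi (z : Gam -> V) := nu [ffun j => mu [ffun i => z (ft j * st i)%g]].
Definition Psi (z : Gam -> V) := mu [ffun i => nu [ffun j => z (st i * ft j)%g]].

Definition E1 := 1%g :: [seq (ft j * st i)%g | j <- enum 'I_m, i <- enum 'I_n].
Definition E2 := 1%g :: [seq (st i * ft j)%g | i <- enum 'I_n, j <- enum 'I_m].

Lemma sigQ_tauQ x g : sigQ (tauQ x) [g] = Phi (fun h => x [g * h]%g).
Proof.
rewrite /sigQ /Phi; congr nu; apply/ffunP => j; rewrite !ffunE /tauQ /lca.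
by congr (mu _); apply/ffunP => i; rewrite !ffunE !qmkM mulgA.
Qed.

Lemma tauQ_sigQ y g : tauQ (sigQ y) [g] = Psi (fun h => y [g * h]%g).
Proof.
rewrite /tauQ /lca /Psi; congr (mu _); apply/ffunP => i; rewrite !ffunE /sigQ.
by congr nu; apply/ffunP => j; rewrite !ffunE (qmkM hN g) qmkM mulgA.
Qed.

Lemma Phi_local z z' : {in E1, z =1 z'} -> Phi z = Phi z'.
Proof.
move=> zz'; congr nu; apply/ffunP => j; rewrite !ffunE; congr (mu _).
apply/ffunP => i; rewrite !ffunE zz' // inE; apply/orP; right.
by apply: allpairs_f; rewrite mem_enum.
Qed.

Lemma Psi_local z z' : {in E2, z =1 z'} -> Psi z = Psi z'.
Proof.
move=> zz'; congr (mu _); apply/ffunP => i; rewrite !ffunE; congr nu.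
apply/ffunP => j; rewrite !ffunE zz' // inE; apply/orP; right.
by apply: allpairs_f; rewrite mem_enum.
Qed.

Lemma sigQ_tauQ_local :
  (forall x, sigQ (tauQ x) = x) <-> (forall z, respects N E1 z -> Phi z = z 1%g).
Proof. exact: fixed_quotient_local (mem_head _ _) Phi_local sigQ_tauQ. Qed.

Lemma tauQ_sigQ_local :
  (forall y, tauQ (sigQ y) = y) <-> (forall z, respects N E2 z -> Psi z = z 1%g).
Proof. exact: fixed_quotient_local (mem_head _ _) Psi_local tauQ_sigQ. Qed.

End LiftedRules.
End QuotientTransfer.

Lemma not_LK_surjunctive_local (Gam : groupType) (K : fieldType) (N : Gam -> bool)
    (hN : is_normal_subgroup N) :
  ~ LK_surjunctive K (quotient_by hN) ->
  exists D : seq Gam, forall (N' : Gam -> bool) (hN' : is_normal_subgroup N'),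
    {in D, N' =1 N} -> ~ LK_surjunctive K (quotient_by hN').
Proof.
move=> /not_LK_surjunctiveP [V [n [s [mu [inj nsurj]]]]].
have [m [t [nu nu_lca]]] := lca_left_inverse inj.
pose st i := qrepr (s i); pose ft j := qrepr (t j).
have tauQE : tauQ st mu (hN := hN) = lca s mu.
  by rewrite /tauQ; congr lca; apply: funext => i; rewrite -qreprE.
have /sigQ_tauQ_local Phi1 : forall x, sigQ ft nu (hN := hN) (tauQ st mu (hN := hN) x) = x.
  move=> x; apply: funext => A; rewrite tauQE /sigQ -[RHS]nu_lca.
  by congr nu; apply/ffunP => j; rewrite !ffunE -qreprE.
have nPsi1 : ~ (forall z, respects N (E2 st ft) z -> Psi st ft mu nu z = z 1%g).
  move=> /tauQ_sigQ_local Psi1; apply: nsurj => y.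
  by exists (sigQ ft nu (hN := hN) y); rewrite -tauQE Psi1.
pose E := E1 st ft ++ E2 st ft.
exists [seq (a^-1 * b)%g | a <- E, b <- E] => N' hN' N'N.
have sub1 : {subset E1 st ft <= E} by move=> a aE1; rewrite mem_cat aE1.
have sub2 : {subset E2 st ft <= E} by move=> a aE2; rewrite mem_cat aE2 orbT.
apply/not_LK_surjunctiveP; exists V, n, (fun i => qmk N' (st i)), mu.
apply: (@left_inverse_not_surjective _ _ _ (sigQ ft nu (hN := hN'))).
  move=> x; apply/sigQ_tauQ_local: x => z.
  by move=> /(respects_agree z sub1 N'N)/Phi1.
apply: contrapT => nex; apply: nPsi1 => z /(respects_agree z sub2 N'N); move: z.
apply/(tauQ_sigQ_local st ft mu nu hN') => y.
by apply: contrapT => ne; apply: nex; exists y.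
Qed.

Local Close Scope ring_scope.

Section Prodiscrete.
(* [closed A] unfolds to a product, which would make the arguments a, P below
   implicit. *)
Local Unset Implicit Arguments.
Variable Gamma : groupType.
Local Notation PT := {ptws Gamma -> bool}.

Lemma open_coord (a : Gamma) (P : set bool) : open [set f : PT | P (f a)].
Proof.
apply: (@open_comp _ _ (fun f : PT => f a) P); last exact: discrete_open.
by move=> f _; exact: (@proj_continuous Gamma (fun=> bool) a).
Qed.

Lemma closed_coord (a : Gamma) (P : set bool) : closed [set f : PT | P (f a)].
Proof. by rewrite -openC; exact: (open_coord a (~` P)). Qed.

Lemma closed_coord_imply (a : Gamma) (C : set PT) :
  closed C -> closed [set f : PT | f a -> C f].
Proof.
move=> Cclosed; have -> : [set f : PT | f a -> C f] = [set f | ~~ f a] `|` C.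
  apply/seteqP; split=> f /=; last by case=> [/negP nfa /nfa|Cf].
  by case: (f a) => fC; [right; exact: fC | left].
by apply: closedU Cclosed; exact: (closed_coord a (fun b => ~~ b)).
Qed.

Lemma open_agree (D : seq Gamma) (g : PT) : open [set f : PT | {in D, f =1 g}].
Proof.
elim: D => [|d D IH].
  rewrite (_ : [set f : PT | {in [::], f =1 g}] = setT); first exact: openT.
  by apply/seteqP; split=> f.
rewrite (_ : [set f : PT | {in d :: D, f =1 g}] =
  [set f : PT | f d = g d] `&` [set f : PT | {in D, f =1 g}]).
  exact: openI (open_coord d (fun b => b = g d)) IH.
apply/seteqP; split=> f /= fg; first by split=> [|e eD]; apply: fg; rewrite inE ?eqxx ?eD ?orbT.
by move=> e; rewrite inE => /orP [/eqP ->|]; [case: fg | apply: fg.2].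
Qed.

Lemma compact_ptws_bool : compact [set: PT].
Proof.
rewrite (_ : [set: PT] = [set f : PT | forall i, [set: bool] (f i)]).
  exact: tychonoff (fun=> finite_compact (@finite_finset bool setT)).
by apply/seteqP.
Qed.

Lemma closed_normal_subgroups : closed [set N : PT | is_normal_subgroup N].
Proof.
rewrite (_ : [set N | _] = [set N : PT | N 1%g]
  `&` \bigcap_(p in [set: Gamma * Gamma])
        [set N : PT | N p.1 -> N p.2 -> N (p.1 * p.2^-1)%g]
  `&` \bigcap_(p in [set: Gamma * Gamma])
        [set N : PT | N p.2 -> N (p.1^-1 * p.2 * p.1)%g]).
  apply: closedI; first apply: closedI; first exact: (closed_coord 1%g id).
    apply: closed_bigI => p _.
    exact: closed_coord_imply _ _ (closed_coord_imply _ _ (closed_coord _ id)).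
  apply: closed_bigI => p _.
  exact: closed_coord_imply _ _ (closed_coord _ id).
apply/seteqP; split=> N /=.
  by case=> N1 Nsub Nconj; split; [split|] => // [[x y]|[g x]] _ /=; [apply: Nsub|apply: Nconj].
by move=> [[N1 Nsub] Nconj]; split=> // [x y Nx Ny|g x Nx];
  [exact: (Nsub (x, y)) | exact: (Nconj (g, x))].
Qed.

End Prodiscrete.

Theorem theorem1p4 (Gamma : groupType) (K : fieldType) :
  let NGamma := [set N : {ptws Gamma -> bool} | is_normal_subgroup N] in
  let Surj := [set N : {ptws Gamma -> bool} |
                exists hN : is_normal_subgroup N,
                  LK_surjunctive K (quotient_by hN)] in
  (exists C : set {ptws Gamma -> bool}, closed C /\ Surj = C `&` NGamma)
  /\ compact Surj.
Proof.
move=> NGamma Surj.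
pose bad (p : {ptws Gamma -> bool} * seq Gamma) :=
  forall (N : Gamma -> bool) (hN : is_normal_subgroup N),
    {in p.2, N =1 p.1} -> ~ LK_surjunctive K (quotient_by hN).
pose U := \bigcup_(p in bad) [set N : {ptws Gamma -> bool} | {in p.2, N =1 p.1}].
have Uopen : open U by apply: bigcup_open => p _; exact: open_agree.
have SurjE : Surj = ~` U `&` NGamma.
  apply/seteqP; split=> N.
    by move=> [hN LK]; split=> // -[p pbad /= Np]; exact: pbad N hN Np LK.
  move=> [nUN hN]; exists hN; apply: contrapT => nLK.
  have [D DN] := not_LK_surjunctive_local nLK.
  by apply: nUN; exists (N, D).
have Cclosed : closed (~` U) by rewrite closedC.
split; first by exists (~` U).
rewrite SurjE; apply: (subclosed_compact _ (@compact_ptws_bool Gamma)) => //.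
exact: closedI Cclosed (@closed_normal_subgroups Gamma).
Qed.
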